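(* Let $G$ be a finite group with $Z(G)=I$, $(C_1,\dots,C_m)$ a class vector of $G$ with $m\ge 6$, and $3\le n\le m-3$. Then $$l^i(C_1,\dots,C_m)\ \ge\ |G|\cdot l^i(C_1,\dots,C_n)\cdot l^i(C_{n+1},\dots,C_m).$$
   Context: $I$ is the trivial group and $\iota$ the identity. A class vector is a tuple of non-trivial conjugacy classes. $\Sigma^i(C_1,\dots,C_k)$ is the set of $G$-conjugacy classes (simultaneous conjugation) of tuples $(\sigma_1,\dots,\sigma_k)$ with $\sigma_j\in C_j$, $\langle\sigma_1,\dots,\sigma_k\rangle=G$, $\sigma_1\cdots\sigma_k=\iota$, and $l^i(C_1,\dots,C_k)=|\Sigma^i(C_1,\dots,C_k)|$. *)

From mathcomp Require Import all_boot all_fingroup all_solvable.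
Set Implicit Arguments. Unset Strict Implicit. Unset Printing Implicit Defensive.
Local Open Scope group_scope.

(* A class vector (C_1,...,C_k) is represented as a sequence s of sets of gT;
   tuples (sigma_1,...,sigma_k) are finite functions 'I_(size s) -> gT. *)

Definition class_vector (gT : finGroupType) (G : {group gT}) (s : seq {set gT}) : Prop :=
  forall C, C \in s -> C \in classes G /\ C != 1.

Definition gen_tuples (gT : finGroupType) (G : {group gT}) (s : seq {set gT})
  : {set {ffun 'I_(size s) -> gT}} :=
  [set t : {ffun 'I_(size s) -> gT} |
     [&& [forall i, t i \in nth set0 s i],
         << [set t i | i : 'I_(size s)] >> == G
       & \prod_(i < size s) t i == 1]].

Definition conj_tuple (gT : finGroupType) k (t : {ffun 'I_k -> gT}) (g : gT)
  : {ffun 'I_k -> gT} := [ffun i => t i ^ g].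

Definition Sigma_i (gT : finGroupType) (G : {group gT}) (s : seq {set gT})
  : {set {set {ffun 'I_(size s) -> gT}}} :=
  [set [set conj_tuple t g | g in G] | t in gen_tuples G s].

Definition l_i (gT : finGroupType) (G : {group gT}) (s : seq {set gT}) : nat :=
  #|Sigma_i G s|.

(* In a centreless group only the identity centralises a generating tuple, so
   simultaneous conjugation by G acts freely on the generating tuples with
   product 1 in a class vector; hence there are exactly |G| l^i of them.
   Concatenating such a tuple for (C_1,...,C_n) with one for (C_(n+1),...,C_m)
   gives injectively such a tuple for (C_1,...,C_m), the first half alone
   already generating G.  Thus |G| l^i_1 |G| l^i_2 <= |G| l^i. *)

From mathcomp Require Import all_boot all_fingroup all_solvable.
Set Implicit Arguments. Unset Strict Implicit. Unset Printing Implicit Defensive.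
Local Open Scope group_scope.

Section ConjTuple.
Variables (gT : finGroupType) (k : nat).
Implicit Type t : {ffun 'I_k -> gT}.

Lemma conj_tuple1 t : conj_tuple t 1 = t.
Proof. by apply/ffunP=> i; rewrite ffunE conjg1. Qed.

Lemma conj_tupleM t a b : conj_tuple t (a * b) = conj_tuple (conj_tuple t a) b.
Proof. by apply/ffunP=> i; rewrite !ffunE conjgM. Qed.

Definition conj_tuple_action := TotalAction conj_tuple1 conj_tupleM.

Lemma prod_conj_tuple t g : \prod_i conj_tuple t g i = (\prod_i t i) ^ g.
Proof.
rewrite (big_morph (conjg^~ g) (fun x y => conjMg x y g) (conj1g g)).
by apply: eq_bigr => i _; rewrite ffunE.
Qed.

Lemma range_conj_tuple t g :
  [set conj_tuple t g i | i : 'I_k] = [set t i | i : 'I_k] :^ g.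
Proof. by rewrite /conjugate -imset_comp; apply: eq_imset => i; rewrite ffunE. Qed.

End ConjTuple.

Section ConjugationOrbits.
Variables (gT : finGroupType) (G : {group gT}).

Lemma Sigma_iE s :
  Sigma_i G s = orbit (conj_tuple_action gT (size s)) G @: gen_tuples G s.
Proof. by []. Qed.

Lemma class_vector_sub s s' :
  {subset s' <= s} -> class_vector G s -> class_vector G s'.
Proof. by move=> ss' cv C /ss'; apply: cv. Qed.

Lemma class_conj C x g : C \in classes G -> x \in C -> g \in G -> x ^ g \in C.
Proof. by case/imsetP=> y _ -> /class_eqP <- gG; apply: memJ_class. Qed.

Lemma gen_tuples_conj s t g : class_vector G s ->
  t \in gen_tuples G s -> g \in G -> conj_tuple t g \in gen_tuples G s.
Proof.
move=> cv; rewrite !inE => /and3P[/forallP tC /eqP genG /eqP prod1] gG.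
apply/and3P; split.
- apply/forallP=> i; rewrite ffunE.
  by apply: class_conj (tC i) gG; case: (cv _ (mem_nth set0 (ltn_ord i))).
- by rewrite range_conj_tuple genJ genG conjGid.
- by rewrite prod_conj_tuple prod1 conj1g.
Qed.

Lemma acts_gen_tuples s : class_vector G s ->
  [acts G, on gen_tuples G s | conj_tuple_action gT (size s)].
Proof.
move=> cv; apply/subsetP=> g gG; rewrite !inE /=.
by apply/subsetP=> t tS; rewrite inE; apply: gen_tuples_conj.
Qed.

Lemma astab1_gen_tuple k (t : {ffun 'I_k -> gT}) :
  'Z(G) = 1 -> << [set t i | i : 'I_k] >> = G ->
  'C_G[t | conj_tuple_action gT k] = 1.
Proof.
move=> Z1 genG; apply/trivgP/subsetP=> h /setIP[hG /astab1P tfix].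
rewrite -Z1 inE hG -genG cent_gen; apply/centP=> _ /imsetP[i _ ->].
by apply/commute_sym/commgP/conjg_fixP; move/ffunP/(_ i): tfix; rewrite ffunE.
Qed.

Lemma card_gen_tuples s : 'Z(G) = 1 -> class_vector G s ->
  #|gen_tuples G s| = (#|G| * l_i G s)%N.
Proof.
move=> Z1 cv; rewrite mulnC /l_i Sigma_iE.
apply: card_uniform_partition (orbit_partition (acts_gen_tuples cv)).
move=> _ /imsetP[t tS ->]; rewrite -(card_orbit_stab (conj_tuple_action gT _) G t).
move: tS; rewrite inE => /and3P[_ /eqP/(astab1_gen_tuple Z1)-> _].
by rewrite cards1 muln1.
Qed.

End ConjugationOrbits.

Lemma big_ord_cast (R : Type) (idx : R) (op : R -> R -> R) m n (e : m = n)
    (F : 'I_m -> R) :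
  \big[op/idx]_(i < m) F i = \big[op/idx]_(i < n) F (cast_ord (esym e) i).
Proof. by case: n / e; apply: eq_bigr => i _; rewrite cast_ord_id. Qed.

Section Concatenation.
Variables (gT : finGroupType) (G : {group gT}) (s1 s2 : seq {set gT}).
Local Notation tuple1 := {ffun 'I_(size s1) -> gT}.
Local Notation tuple2 := {ffun 'I_(size s2) -> gT}.

Definition cat_idx (u : 'I_(size s1) + 'I_(size s2)) : 'I_(size (s1 ++ s2)) :=
  cast_ord (esym (size_cat s1 s2)) (unsplit u).

Definition split_idx (i : 'I_(size (s1 ++ s2))) : 'I_(size s1) + 'I_(size s2) :=
  split (cast_ord (size_cat s1 s2) i).

Lemma split_idxK : cancel split_idx cat_idx.
Proof. by move=> i; rewrite /cat_idx /split_idx splitK cast_ordK. Qed.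

Lemma cat_idxK : cancel cat_idx split_idx.
Proof. by move=> u; rewrite /cat_idx /split_idx cast_ordKV unsplitK. Qed.

Definition cat_tuple (t1 : tuple1) (t2 : tuple2) :
  {ffun 'I_(size (s1 ++ s2)) -> gT} :=
  [ffun i => match split_idx i with inl j => t1 j | inr j => t2 j end].

Lemma cat_tupleL (t1 : tuple1) (t2 : tuple2) j :
  cat_tuple t1 t2 (cat_idx (inl j)) = t1 j.
Proof. by rewrite ffunE cat_idxK. Qed.

Lemma cat_tupleR (t1 : tuple1) (t2 : tuple2) j :
  cat_tuple t1 t2 (cat_idx (inr j)) = t2 j.
Proof. by rewrite ffunE cat_idxK. Qed.

Lemma nth_cat_idx (u : 'I_(size s1) + 'I_(size s2)) :
  nth set0 (s1 ++ s2) (cat_idx u) =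
  match u with inl j => nth set0 s1 j | inr j => nth set0 s2 j end.
Proof.
by case: u => j; rewrite nth_cat /= ?ltn_ord // ltnNge leq_addr addKn.
Qed.

Lemma prod_cat_tuple (t1 : tuple1) (t2 : tuple2) :
  \prod_i cat_tuple t1 t2 i = (\prod_i t1 i) * \prod_i t2 i.
Proof.
rewrite (big_ord_cast _ _ (size_cat s1 s2)) big_split_ord.
by congr (_ * _); apply: eq_bigr => j _;
  [exact: (cat_tupleL t1 t2) | exact: (cat_tupleR t1 t2)].
Qed.

Lemma cat_tuple_inj : injective (uncurry cat_tuple).
Proof.
move=> [t1 t2] [u1 u2] /= /ffunP eq_cat; congr (_, _); apply/ffunP=> j.
  by have := eq_cat (cat_idx (inl j)); rewrite !cat_tupleL.
by have := eq_cat (cat_idx (inr j)); rewrite !cat_tupleR.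
Qed.

Lemma cat_gen_tuples (t1 : tuple1) (t2 : tuple2) :
  t1 \in gen_tuples G s1 -> t2 \in gen_tuples G s2 ->
  cat_tuple t1 t2 \in gen_tuples G (s1 ++ s2).
Proof.
rewrite !inE => /and3P[/forallP t1C /eqP gen1 /eqP prod1].
move=> /and3P[/forallP t2C /eqP gen2 /eqP prod2].
apply/and3P; split.
- apply/forallP=> i; rewrite -(split_idxK i) nth_cat_idx.
  by case: (split_idx i) => j; rewrite ?cat_tupleL ?cat_tupleR.
- rewrite eqEsubset gen_subG; apply/andP; split.
    apply/subsetP=> _ /imsetP[i _ ->]; rewrite -(split_idxK i).
    case: (split_idx i) => j; rewrite ?cat_tupleL ?cat_tupleR.
      by rewrite -gen1 mem_gen ?imset_f.
    by rewrite -gen2 mem_gen ?imset_f.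
  rewrite -{1}gen1 genS //.
  by apply/subsetP=> _ /imsetP[j _ ->]; rewrite -(cat_tupleL t1 t2) imset_f.
- by rewrite prod_cat_tuple prod1 prod2 mulg1.
Qed.

Lemma card_gen_tuples_cat :
  #|gen_tuples G s1| * #|gen_tuples G s2| <= #|gen_tuples G (s1 ++ s2)|.
Proof.
rewrite -cardsX -(card_imset _ cat_tuple_inj); apply/subset_leq_card/subsetP.
by move=> _ /imsetP[[t1 t2] /setXP[t1S t2S] ->]; apply: cat_gen_tuples.
Qed.

End Concatenation.

Theorem proposition12 (gT : finGroupType) (G : {group gT}) (C : seq {set gT}) (n : nat) :
  ('Z(G) = 1)%g ->
  class_vector G C ->
  6 <= size C ->
  3 <= n -> n <= size C - 3 ->
  #|G| * l_i G (take n C) * l_i G (drop n C) <= l_i G C.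
Proof.
move=> Z1 cvC _ _ _.
have cv_take : class_vector G (take n C) by apply: class_vector_sub cvC => D /mem_take.
have cv_drop : class_vector G (drop n C) by apply: class_vector_sub cvC => D /mem_drop.
have := card_gen_tuples_cat G (take n C) (drop n C).
by rewrite cat_take_drop !card_gen_tuples // mulnCA leq_pmul2l ?cardG_gt0.
Qed.
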